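(* There is an absolute constant $c_0\in(0,1)$ such that the following holds. Let $A\in[0,1]^{m\times n}$ with $0<\Delta_1<c_0$, let $x\in\mathbb{R}_{\ge0}^n$, and let $\delta\in(0,1)$ with $\delta\ge2\sqrt{\Delta_1\ln(1/\Delta_1)}$ and $\alpha=\frac{1+\delta+\delta^2/2}{1-\delta}$. Let $i\in[m]$ and let $\theta_i\in(0,\Delta_1]$ satisfy $\sum_{j:A_{i,j}\le\theta_i}A_{i,j}x_j\ge1-\delta$. If $z$ is the randomized rounding of $\alpha x$, then $\Pr[(Az)_i<1]\le\theta_i$.
   Context: $\Delta_1=\max_{j\in[n]}\sum_{i=1}^mA_{i,j}$. Randomized rounding of $\alpha x$: $z\in\mathbb{Z}_{\ge0}^n$ is the random vector with independent coordinates $z_j=\lfloor\alpha x_j\rfloor+B_j$, where $B_j\in\{0,1\}$ is Bernoulli with $\Pr[B_j=1]=\alpha x_j-\lfloor\alpha x_j\rfloor$. *)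

From Stdlib Require Import Reals Lra List.
Import ListNotations.
Open Scope R_scope.

Fixpoint rsum (f : nat -> R) (k : nat) : R :=
  match k with O => 0 | S k' => rsum f k' + f k' end.

Fixpoint rprod (f : nat -> R) (k : nat) : R :=
  match k with O => 1 | S k' => rprod f k' * f k' end.

(* Delta_1 = max_{j<n} sum_{i<m} A i j  (0 if n = 0) *)
Fixpoint rmax_upto (f : nat -> R) (k : nat) : R :=
  match k with O => 0 | S k' => Rmax (rmax_upto f k') (f k') end.

Definition Delta1 (m n : nat) (A : nat -> nat -> R) : R :=
  rmax_upto (fun j => rsum (fun i => A i j) m) n.

Definition rfloor (r : R) : R := IZR (Int_part r).

(* All bit vectors of length n (the outcomes of the Bernoulli variables B_j). *)
Fixpoint bitvecs (n : nat) : list (list bool) :=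
  match n with
  | O => [[]]
  | S k => map (cons false) (bitvecs k) ++ map (cons true) (bitvecs k)
  end.

Definition bit (b : list bool) (j : nat) : R := if nth j b false then 1 else 0.

(* Randomized rounding of y (y = alpha x): z_j = floor(y_j) + B_j, with
   B_j independent Bernoulli, Pr[B_j = 1] = y_j - floor(y_j). *)
Definition rr_prob (y : nat -> R) (j : nat) : R := y j - rfloor (y j).

Definition rr_weight (n : nat) (y : nat -> R) (b : list bool) : R :=
  rprod (fun j => if nth j b false then rr_prob y j else 1 - rr_prob y j) n.

Definition rr_z (y : nat -> R) (b : list bool) (j : nat) : R :=
  rfloor (y j) + bit b j.

Definition rr_Pr (n : nat) (y : nat -> R) (E : (nat -> R) -> bool) : R :=
  fold_right Rplus 0
    (map (fun b => if E (rr_z y b) then rr_weight n y b else 0) (bitvecs n)).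

Definition Rltb (a b : R) : bool := if Rlt_dec a b then true else false.
Definition Rleb (a b : R) : bool := if Rle_dec a b then true else false.

(* Chernoff's method applied to the lower tail of the row (Az)_i, keeping only
   the small entries: a_j := A_{i,j} if A_{i,j} <= theta, and 0 otherwise.  For lambda >= 0, Markov's inequality and
   independence give Pr[(Az)_i < 1] <= e^lambda * prod_j E[e^{-lambda a_j z_j}],
   and e^{-u} <= 1 - u + u^2/2 bounds every factor by
   exp (-lambda a_j y_j + lambda^2 theta a_j y_j / 2) with y = alpha x.  Since
   sum_j a_j y_j >= alpha (1 - delta) = M := 1 + delta + delta^2/2, the choice
   lambda = (M - 1) / (theta M) yields the bound exp (-(M - 1)^2 / (2 theta M)),
   which is at most exp (-delta^2 / (4 theta)).  Finally delta^2 >= 4 D ln (1/D)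
   and the monotonicity of -t ln t on (0, 1/3] give exp (-delta^2/(4 theta)) <= theta. *)
From Stdlib Require Import Reals Lra Lia List.
From Coquelicot Require Import Coquelicot.
Open Scope R_scope.

Lemma rsum_ext f g k :
  (forall j, (j < k)%nat -> f j = g j) -> rsum f k = rsum g k.
Proof.
induction k as [|k IH]; intros H; simpl; auto.
rewrite IH by (intros; apply H; lia).
rewrite H by lia; reflexivity.
Qed.

Lemma rsum_le f g k :
  (forall j, (j < k)%nat -> f j <= g j) -> rsum f k <= rsum g k.
Proof.
induction k as [|k IH]; intros H; simpl; [lra|].
assert (rsum f k <= rsum g k) by (apply IH; intros; apply H; lia).
assert (f k <= g k) by (apply H; lia).
lra.
Qed.

Lemma rsum_scal c f k : rsum (fun j => c * f j) k = c * rsum f k.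
Proof. induction k as [|k IH]; simpl; [ring | rewrite IH; ring]. Qed.

Lemma rprod_ext f g k :
  (forall j, (j < k)%nat -> f j = g j) -> rprod f k = rprod g k.
Proof.
induction k as [|k IH]; intros H; simpl; auto.
rewrite IH by (intros; apply H; lia).
rewrite H by lia; reflexivity.
Qed.

Lemma rprod_nonneg f k :
  (forall j, (j < k)%nat -> 0 <= f j) -> 0 <= rprod f k.
Proof.
induction k as [|k IH]; intros H; simpl; [lra|].
apply Rmult_le_pos; [apply IH; intros; apply H|apply H]; lia.
Qed.

Lemma rprod_le f g k :
  (forall j, (j < k)%nat -> 0 <= f j <= g j) -> rprod f k <= rprod g k.
Proof.
induction k as [|k IH]; intros H; simpl; [lra|].
assert (rprod f k <= rprod g k) by (apply IH; intros; apply H; lia).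
assert (0 <= rprod f k) by (apply rprod_nonneg; intros; apply H; lia).
assert (0 <= f k <= g k) by (apply H; lia).
apply Rmult_le_compat; lra.
Qed.

Lemma rprod_mul f g k : rprod (fun j => f j * g j) k = rprod f k * rprod g k.
Proof. induction k as [|k IH]; simpl; [ring | rewrite IH; ring]. Qed.

Lemma rprod_exp f k : rprod (fun j => exp (f j)) k = exp (rsum f k).
Proof.
induction k as [|k IH]; simpl; [now rewrite exp_0 | now rewrite IH, exp_plus].
Qed.

Lemma rprod_succ_l f k : rprod f (S k) = f 0%nat * rprod (fun j => f (S j)) k.
Proof. induction k as [|k IH]; simpl in *; [ring | rewrite IH; ring]. Qed.

Lemma sum_map_app {T} (f : T -> R) l1 l2 :
  fold_right Rplus 0 (map f (l1 ++ l2))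
  = fold_right Rplus 0 (map f l1) + fold_right Rplus 0 (map f l2).
Proof. induction l1 as [|b l IH]; simpl; [ring | rewrite IH; ring]. Qed.

Lemma sum_map_ext {T} (f g : T -> R) l :
  (forall b, f b = g b) -> fold_right Rplus 0 (map f l) = fold_right Rplus 0 (map g l).
Proof. intros H; induction l as [|b l IH]; simpl; [reflexivity | now rewrite H, IH]. Qed.

Lemma sum_map_le {T} (f g : T -> R) l :
  (forall b, f b <= g b) -> fold_right Rplus 0 (map f l) <= fold_right Rplus 0 (map g l).
Proof. intros H; induction l as [|b l IH]; simpl; [lra | specialize (H b); lra]. Qed.

Lemma sum_map_scal {T} c (f : T -> R) l :
  fold_right Rplus 0 (map (fun b => c * f b) l) = c * fold_right Rplus 0 (map f l).
Proof. induction l as [|b l IH]; simpl; [ring | rewrite IH; ring]. Qed.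

Lemma sum_bitvecs_rprod n (F : nat -> bool -> R) :
  fold_right Rplus 0
    (map (fun b => rprod (fun j => F j (nth j b false)) n) (bitvecs n))
  = rprod (fun j => F j true + F j false) n.
Proof.
revert F; induction n as [|n IH]; intros F; [simpl; ring|].
simpl bitvecs.
rewrite sum_map_app, !map_map.
rewrite (sum_map_ext _ (fun b => F 0%nat false * rprod (fun j => F (S j) (nth j b false)) n))
  by (intros b; apply rprod_succ_l).
rewrite (sum_map_ext (fun b => rprod _ _)
           (fun b => F 0%nat true * rprod (fun j => F (S j) (nth j b false)) n))
  by (intros b; apply rprod_succ_l).
rewrite !sum_map_scal, !(IH (fun j => F (S j))), rprod_succ_l.
ring.
Qed.

Definition rr_E (n : nat) (y : nat -> R) (G : (nat -> R) -> R) : R :=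
  fold_right Rplus 0 (map (fun b => rr_weight n y b * G (rr_z y b)) (bitvecs n)).

Lemma rr_prob_bounds y j : 0 <= rr_prob y j < 1.
Proof.
unfold rr_prob, rfloor. pose proof (base_Int_part (y j)). lra.
Qed.

Lemma rfloor_nonneg r : 0 <= r -> 0 <= rfloor r.
Proof.
intros Hr. unfold rfloor. destruct (base_Int_part r) as [_ Hlt].
assert (Hgt : (-1 < Int_part r)%Z) by (apply lt_IZR; lra).
apply IZR_le. lia.
Qed.

Lemma rr_z_nonneg y b j : 0 <= y j -> 0 <= rr_z y b j.
Proof.
intros Hy. unfold rr_z, bit. pose proof (rfloor_nonneg _ Hy).
destruct (nth j b false); lra.
Qed.

Lemma rr_weight_nonneg n y b : 0 <= rr_weight n y b.
Proof.
apply rprod_nonneg. intros j _. pose proof (rr_prob_bounds y j).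
destruct (nth j b false); lra.
Qed.

Lemma rr_E_scal n y c G : rr_E n y (fun z => c * G z) = c * rr_E n y G.
Proof.
unfold rr_E. rewrite <- sum_map_scal. apply sum_map_ext. intros b. ring.
Qed.

Lemma rr_Pr_le_E n y (E : (nat -> R) -> bool) (G : (nat -> R) -> R) :
  (forall b, 0 <= G (rr_z y b)) ->
  (forall b, E (rr_z y b) = true -> 1 <= G (rr_z y b)) ->
  rr_Pr n y E <= rr_E n y G.
Proof.
intros Hpos HE. apply sum_map_le. intros b.
pose proof (rr_weight_nonneg n y b).
specialize (Hpos b). specialize (HE b).
destruct (E (rr_z y b)).
- specialize (HE eq_refl). nra.
- now apply Rmult_le_pos.
Qed.

Lemma rr_E_rprod n y (h : nat -> R -> R) :
  rr_E n y (fun z => rprod (fun j => h j (z j)) n)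
  = rprod (fun j => rr_prob y j * h j (rfloor (y j) + 1)
                    + (1 - rr_prob y j) * h j (rfloor (y j))) n.
Proof.
set (F := fun j (c : bool) =>
  (if c then rr_prob y j else 1 - rr_prob y j)
  * h j (rfloor (y j) + if c then 1 else 0)).
transitivity (rprod (fun j => F j true + F j false) n).
- rewrite <- sum_bitvecs_rprod. apply sum_map_ext. intros b.
  unfold rr_weight. rewrite <- rprod_mul. apply rprod_ext. intros j _.
  unfold F, rr_z, bit. destruct (nth j b false); reflexivity.
- apply rprod_ext. intros j _. unfold F. now rewrite Rplus_0_r.
Qed.

Lemma exp_le_mono a b : a <= b -> exp a <= exp b.
Proof.
intros [Hlt | ->]; [apply Rlt_le, exp_increasing, Hlt | apply Rle_refl].
Qed.

Lemma exp_neg_le_quadratic u : 0 <= u -> exp (- u) <= 1 - u + u ^ 2 / 2.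
Proof.
intros Hu. destruct (Req_dec u 0) as [->|Hu0].
{ rewrite Ropp_0, exp_0. lra. }
destruct (MVT_cor2 (fun v => 1 - v + v ^ 2 / 2 - exp (- v))
                   (fun v => -1 + v + exp (- v)) 0 u) as [c [Hmvt Hc]].
- lra.
- intros c _. apply is_derive_Reals. auto_derive; auto. simpl; field.
- assert (0 <= -1 + c + exp (- c)) by (pose proof (exp_ineq1_le (- c)); lra).
  rewrite Ropp_0, exp_0 in Hmvt. nra.
Qed.

Lemma bernoulli_exp_le p f u : 0 <= p <= 1 -> 0 <= u ->
  p * exp (- (u * (f + 1))) + (1 - p) * exp (- (u * f))
  <= exp (- (u * (f + p)) + p * u ^ 2 / 2).
Proof.
intros Hp Hu.
replace (- (u * (f + 1))) with (- (u * f) + - u) by ring.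
replace (- (u * (f + p)) + p * u ^ 2 / 2) with (- (u * f) + p * (- u + u ^ 2 / 2))
  by (unfold Rdiv; ring).
rewrite !exp_plus.
pose proof (exp_pos (- (u * f))).
pose proof (exp_neg_le_quadratic u Hu).
pose proof (exp_ineq1_le (p * (- u + u ^ 2 / 2))).
assert (p * exp (- u) + (1 - p) <= exp (p * (- u + u ^ 2 / 2))) by nra.
nra.
Qed.

Lemma rr_lower_tail n y (c a : nat -> R) lam theta :
  (forall j, (j < n)%nat -> 0 <= y j) ->
  (forall j, (j < n)%nat -> 0 <= a j <= c j /\ a j <= theta) ->
  0 <= lam ->
  rr_Pr n y (fun z => Rltb (rsum (fun j => c j * z j) n) 1)
  <= exp (lam + (- lam + lam ^ 2 * theta / 2) * rsum (fun j => a j * y j) n).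
Proof.
intros Hy Ha Hlam.
set (h := fun j v => exp (- (lam * a j * v))).
assert (Hmarkov : rr_Pr n y (fun z => Rltb (rsum (fun j => c j * z j) n) 1)
                  <= rr_E n y (fun z => exp lam * rprod (fun j => h j (z j)) n)).
{ apply rr_Pr_le_E; intros b.
  - apply Rmult_le_pos; [apply Rlt_le, exp_pos|].
    apply rprod_nonneg. intros j _. apply Rlt_le, exp_pos.
  - unfold Rltb. destruct (Rlt_dec _ 1) as [Hlt|]; [intros _|discriminate].
    unfold h. rewrite rprod_exp, <- exp_plus.
    rewrite (rsum_ext _ (fun j => (- lam) * (a j * rr_z y b j))) by (intros; ring).
    rewrite rsum_scal.
    assert (rsum (fun j => a j * rr_z y b j) n <= rsum (fun j => c j * rr_z y b j) n).
    { apply rsum_le. intros j Hj. pose proof (rr_z_nonneg y b j (Hy j Hj)).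
      destruct (Ha j Hj) as [[? ?] _]. apply Rmult_le_compat_r; lra. }
    pose proof (exp_ineq1_le (lam + - lam * rsum (fun j => a j * rr_z y b j) n)).
    nra. }
rewrite rr_E_scal, rr_E_rprod in Hmarkov.
eapply Rle_trans; [apply Hmarkov|].
rewrite <- rsum_scal, exp_plus, <- rprod_exp.
apply Rmult_le_compat_l; [apply Rlt_le, exp_pos|].
apply rprod_le. intros j Hj.
destruct (Ha j Hj) as [[Ha0 _] Hath].
pose proof (rr_prob_bounds y j) as Hp.
pose proof (rfloor_nonneg _ (Hy j Hj)) as Hf.
assert (Hyj : rfloor (y j) + rr_prob y j = y j) by (unfold rr_prob; ring).
unfold h. split.
- pose proof (exp_pos (- (lam * a j * (rfloor (y j) + 1)))).
  pose proof (exp_pos (- (lam * a j * rfloor (y j)))). nra.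
- eapply Rle_trans; [apply (bernoulli_exp_le _ _ (lam * a j)); [lra|nra]|].
  apply exp_le_mono. rewrite Hyj.
  assert (a j * a j * rr_prob y j <= theta * a j * y j).
  { assert (0 <= a j * rr_prob y j) by nra.
    assert (a j * (a j * rr_prob y j) <= theta * (a j * rr_prob y j)) by nra.
    assert (theta * a j * rr_prob y j <= theta * a j * y j)
      by (apply Rmult_le_compat_l; nra).
    nra. }
  assert (lam ^ 2 * (a j * a j * rr_prob y j) <= lam ^ 2 * (theta * a j * y j)) by nra.
  unfold Rdiv. nra.
Qed.

Lemma chernoff_exponent_le theta M s lam :
  0 < theta -> 1 < M -> M <= s -> lam * (theta * M) = M - 1 ->
  lam + (- lam + lam ^ 2 * theta / 2) * s <= - (M - 1) ^ 2 / (2 * theta * M).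
Proof.
intros Hth HM Hs Hlam.
assert (Hlam' : lam = (M - 1) / (theta * M)) by (rewrite <- Hlam; field; lra).
assert (Hlam0 : 0 < lam) by (rewrite Hlam'; apply Rdiv_lt_0_compat; nra).
assert (Hlamth : lam * theta < 1) by nra.
assert (Hcoef : - lam + lam ^ 2 * theta / 2 <= 0) by nra.
assert (Hval : lam + (- lam + lam ^ 2 * theta / 2) * M = - (M - 1) ^ 2 / (2 * theta * M))
  by (rewrite Hlam'; field; lra).
assert ((- lam + lam ^ 2 * theta / 2) * s <= (- lam + lam ^ 2 * theta / 2) * M)
  by (apply Rmult_le_compat_neg_l; lra).
lra.
Qed.

Lemma rounding_gap_exponent_le delta theta : 0 < delta -> 0 < theta ->
  - (delta + delta ^ 2 / 2) ^ 2 / (2 * theta * (1 + delta + delta ^ 2 / 2))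
  <= - delta ^ 2 / (4 * theta).
Proof.
intros Hd Hth.
set (M := 1 + delta + delta ^ 2 / 2).
assert (HM : 1 < M) by (unfold M; nra).
replace (- delta ^ 2 / (4 * theta))
  with (- (delta ^ 2 * M / 2) / (2 * theta * M)) by (field; lra).
unfold Rdiv. apply Rmult_le_compat_r; [apply Rlt_le, Rinv_0_lt_compat; nra|].
unfold M. nra.
Qed.

Lemma neg_xlnx_le th D : 0 < th -> th <= D -> D <= 1/3 -> - th * ln th <= - D * ln D.
Proof.
intros Hth HthD HD.
assert (Hdiff : ln D - ln th <= D / th - 1).
{ pose proof (exp_ineq1_le (ln (D / th))) as H.
  rewrite exp_ln in H by (apply Rdiv_lt_0_compat; lra).
  unfold Rdiv in *. rewrite ln_mult, ln_Rinv in H by (try apply Rinv_0_lt_compat; lra).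
  lra. }
assert (HlnD : 1 <= - ln D).
{ assert (ln D <= ln (/ 3)) by (apply ln_le; lra).
  rewrite ln_Rinv in H by lra.
  assert (1 <= ln 3).
  { rewrite <- ln_exp at 1. apply ln_le; [apply exp_pos | apply exp_le_3]. }
  lra. }
assert (th * (ln D - ln th) <= D - th).
{ replace (D - th) with (th * (D / th - 1)) by (field; lra).
  apply Rmult_le_compat_l; lra. }
assert ((D - th) * 1 <= (D - th) * (- ln D)) by (apply Rmult_le_compat_l; lra).
nra.
Qed.

Lemma exp_neg_sq_div_le theta D delta :
  0 < theta <= D -> D <= 1/3 -> delta >= 2 * sqrt (D * ln (1 / D)) ->
  exp (- delta ^ 2 / (4 * theta)) <= theta.
Proof.
intros Hth HD Hdelta.
assert (HlnD : ln (1 / D) = - ln D)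
  by (unfold Rdiv; rewrite Rmult_1_l, ln_Rinv; lra).
assert (Hpos : 0 <= D * ln (1 / D)).
{ rewrite HlnD. assert (ln D < ln 1) by (apply ln_increasing; lra).
  rewrite ln_1 in H. nra. }
assert (Hsq : 4 * (D * ln (1 / D)) <= delta ^ 2).
{ pose proof (sqrt_sqrt _ Hpos). pose proof (sqrt_pos (D * ln (1 / D))). nra. }
rewrite HlnD in Hsq.
pose proof (neg_xlnx_le theta D ltac:(lra) ltac:(lra) HD).
rewrite <- (exp_ln theta) at 2 by lra.
apply exp_le_mono.
apply Rmult_le_reg_r with theta; [lra|].
replace (- delta ^ 2 / (4 * theta) * theta) with (- delta ^ 2 / 4) by (field; lra).
nra.
Qed.

Theorem mainTheorem16 :
  exists c0 : R, 0 < c0 < 1 /\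
  forall (m n : nat) (A : nat -> nat -> R) (x : nat -> R)
         (delta : R) (i : nat) (theta : R),
    (forall i' j, (i' < m)%nat -> (j < n)%nat -> 0 <= A i' j <= 1) ->
    0 < Delta1 m n A -> Delta1 m n A < c0 ->
    (forall j, (j < n)%nat -> 0 <= x j) ->
    0 < delta < 1 ->
    delta >= 2 * sqrt (Delta1 m n A * ln (1 / Delta1 m n A)) ->
    (i < m)%nat ->
    0 < theta <= Delta1 m n A ->
    rsum (fun j => if Rleb (A i j) theta then A i j * x j else 0) n >= 1 - delta ->
    let alpha := (1 + delta + delta ^ 2 / 2) / (1 - delta) in
    rr_Pr n (fun j => alpha * x j)
      (fun z => Rltb (rsum (fun j => A i j * z j) n) 1) <= theta.
Proof.
exists (1/3). split; [lra|].
intros m n A x delta i theta HA HD0 HD1 Hx Hd Hdelta Hi Hth Hsmall alpha.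
set (M := 1 + delta + delta ^ 2 / 2).
set (a := fun j => if Rleb (A i j) theta then A i j else 0).
set (lam := (M - 1) / (theta * M)).
assert (HM : 1 < M) by (unfold M; nra).
assert (Halpha : alpha * (1 - delta) = M) by (unfold alpha, M; field; lra).
assert (Hsum : M <= rsum (fun j => a j * (alpha * x j)) n).
{ rewrite (rsum_ext _ (fun j => alpha * (if Rleb (A i j) theta then A i j * x j else 0)))
    by (intros j _; unfold a; destruct (Rleb (A i j) theta); ring).
  rewrite rsum_scal. rewrite <- Halpha. apply Rmult_le_compat_l; nra. }
eapply Rle_trans; [apply (rr_lower_tail _ _ _ a lam theta)|].
- intros j Hj. pose proof (Hx j Hj). nra.
- intros j Hj. unfold a, Rleb. pose proof (HA i j Hi Hj).
  destruct (Rle_dec (A i j) theta); lra.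
- unfold lam. apply Rlt_le, Rdiv_lt_0_compat; nra.
- eapply Rle_trans; [|apply (exp_neg_sq_div_le theta (Delta1 m n A) delta); lra].
  apply exp_le_mono.
  eapply Rle_trans; [apply (chernoff_exponent_le theta M); [lra|lra|exact Hsum|]|].
  + unfold lam. field. lra.
  + replace (M - 1) with (delta + delta ^ 2 / 2) by (unfold M; ring).
    apply rounding_gap_exponent_le; lra.
Qed.
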